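(* Let $\mathcal L$ be a finite distributive lattice, $\mathcal I$ a poset ideal and $\mathcal J$ a poset coideal of $\mathcal L$ such that $\mathcal I\cup\mathcal J=\mathcal L$. Then $H_{\mathcal I\cap\mathcal J}=H_{\mathcal I}\cap H_{\mathcal J}$ if and only if for each pair $p,q\in\mathcal L$ such that $q$ is a lower neighbor of $p$, either $p\in\mathcal I$ or $q\in\mathcal J$.
   Context: Let $P$ be the set of join-irreducible elements of $\mathcal L$ (elements with exactly one lower neighbor), with the induced order; for $p\in\mathcal L$ put $\ell(p)=\{q\in P:q\le p\}$. Let $K$ be a field and $S=K[x_p,y_p: p\in P]$ with all variables of degree 1. For $q\in\mathcal L$ put $u_q=\prod_{p\in\ell(q)}x_p\prod_{p\in P\setminus\ell(q)}y_p$, and for a subset $\mathcal S\subseteq\mathcal L$ let $H_{\mathcal S}$ be the ideal of $S$ generated by $\{u_q:q\in\mathcal S\}$ (the zero ideal if $\mathcal S=\emptyset$). $q$ is a lower neighbor of $p$ if $q<p$ and no element lies strictly between them. A poset ideal $\mathcal I$ satisfies: $\alpha\in\mathcal I,\ \beta<\alpha\Rightarrow\beta\in\mathcal I$; a poset coideal satisfies: $\alpha\in\mathcal J,\ \beta>\alpha\Rightarrow\beta\in\mathcal J$. *)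

From HB Require Import structures.
From mathcomp Require Import all_boot all_order all_algebra.
From mathcomp Require Import mpoly.

Set Implicit Arguments.
Unset Strict Implicit.
Unset Printing Implicit Defensive.

Import Order.Theory GRing.Theory.
Local Open Scope ring_scope.

Section HibiDefs.

Context {disp : Order.disp_t} (L : finDistrLatticeType disp).

Definition lower_neighbor (q p : L) : bool :=
  (q < p)%O && [forall r : L, ~~ ((q < r)%O && (r < p)%O)].

Definition join_irr (p : L) : bool :=
  #|[set q : L | lower_neighbor q p]| == 1%N.

Definition JI : Type := {p : L | join_irr p}.

Definition nJI : nat := #|{: JI}|.

Context (K : fieldType).

(* S = K[x_p, y_p : p in P]; x_p is variable number rank(p),
   y_p is variable number nJI + rank(p). *)
Definition Spoly := {mpoly K[nJI + nJI]}.

Definition xv (p : JI) : Spoly := 'X_(lshift nJI (enum_rank p)).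
Definition yv (p : JI) : Spoly := 'X_(rshift nJI (enum_rank p)).

Definition u_mon (q : L) : Spoly :=
  (\prod_(p : JI | (val p <= q)%O) xv p) *
  (\prod_(p : JI | ~~ (val p <= q)%O) yv p).

Definition H_ideal (A : {set L}) (f : Spoly) : Prop :=
  exists c : L -> Spoly, f = \sum_(q in A) c q * u_mon q.

Definition poset_ideal (I : {set L}) : Prop :=
  forall a b : L, a \in I -> (b < a)%O -> b \in I.

Definition poset_coideal (J : {set L}) : Prop :=
  forall a b : L, a \in J -> (a < b)%O -> b \in J.

End HibiDefs.

From HB Require Import structures.
From mathcomp Require Import all_boot all_order all_algebra.
From mathcomp Require Import mpoly.

(* H_A is a monomial ideal, so f lies in H_A iff every monomial of f is
   divisible by some u_r with r in A.  In a finite distributive lattice the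
   join-irreducibles are join-prime and determine the order, so u_r divides
   lcm(u_p, u_q) exactly when p `&` q <= r <= p `|` q.  Hence
   H_(I :&: J) = H_I :&: H_J iff every interval [p `&` q, p `|` q] with p in I
   and q in J meets I :&: J.  A lower neighbor q of p with p \notin I and
   q \notin J yields the interval [q, p] = {q, p}, which misses I :&: J.
   Conversely, going down from q \notin I along lower neighbors towards
   p `&` q \in I, the first element of I reached lies in J. *)

Set Implicit Arguments.
Unset Strict Implicit.
Unset Printing Implicit Defensive.

Import Order.Theory GRing.Theory.

Local Open Scope order_scope.

Section FinPOrderInduction.

Context {d : Order.disp_t} (T : finPOrderType d).

Lemma card_lt_mono (x y : T) :
  x < y -> (#|[set z | (z < x)%O]| < #|[set z | (z < y)%O]|)%N.
Proof.
move=> xy; apply/proper_card/properP; split.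
  by apply/subsetP => z; rewrite !inE => /lt_trans; apply.
by exists x; rewrite !inE ?ltxx.
Qed.

Lemma lt_wf_ind (P : T -> Prop) :
  (forall x, (forall y, y < x -> P y) -> P x) -> forall x, P x.
Proof.
move=> IH; suff: forall n x, (#|[set z | (z < x)%O]| < n)%N -> P x.
  by move=> ltP x; apply: (ltP _ x (ltnSn _)).
elim=> // n IHn x xn; apply: IH => y yx.
by apply: IHn; apply: leq_trans (card_lt_mono yx) _.
Qed.

End FinPOrderInduction.

Lemma gt_wf_ind {d : Order.disp_t} (T : finPOrderType d) (P : T -> Prop) :
  (forall x, (forall y, x < y -> P y) -> P x) -> forall x, P x.
Proof. by move=> IH; apply: (@lt_wf_ind _ T^d) => x IHx; apply: IH. Qed.

Lemma ltIl {d : Order.disp_t} (T : meetSemilatticeType d) (a b : T) :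
  ~~ (a <= b) -> a `&` b < a.
Proof. by move=> ab; rewrite lt_neqAle eq_meetl ab leIl. Qed.

Section DistrLattice.

Context {disp : Order.disp_t} (L : finDistrLatticeType disp).
Implicit Types (a b c j p q r x y : L) (I J : {set L}).

Lemma lower_neighbor_lt c x : lower_neighbor c x -> c < x.
Proof. by case/andP. Qed.

Lemma lower_neighbor_between c x y :
  lower_neighbor c x -> c <= y <= x -> (y == c) || (y == x).
Proof.
case/andP=> _ /forallP/(_ y); rewrite !lt_neqAle negb_and => nbw /andP[cy yx].
by rewrite cy yx !andbT !negbK eq_sym in nbw.
Qed.

Lemma exists_lower_neighbor_ge a x : a < x -> exists2 c, lower_neighbor c x & a <= c.
Proof.
elim/(@gt_wf_ind _ L): a => a IH ax.
have [ax_nb | ] := boolP (lower_neighbor a x); first by exists a.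
rewrite /lower_neighbor ax => /forallPn[r]; rewrite negbK => /andP[ar rx].
by have [c cx rc] := IH r ar rx; exists c; last exact: le_trans (ltW ar) rc.
Qed.

Lemma join_irr_lower_neighbor_uniq j c c' :
  join_irr j -> lower_neighbor c j -> lower_neighbor c' j -> c = c'.
Proof.
move=> /cards1P[c0 Hc0] cj c'j.
have inc0 y : lower_neighbor y j -> y = c0.
  by move=> yj; apply/set1P; rewrite -Hc0 inE.
by rewrite (inc0 _ cj) (inc0 _ c'j).
Qed.

Lemma join_irr_leU j a b : join_irr j -> (j <= a `|` b) = (j <= a) || (j <= b).
Proof.
move=> jirr; apply/idP/idP => [|/lexU2 //].
apply: contraTT; rewrite negb_or => /andP[ja jb].
have [ca caj jac] := exists_lower_neighbor_ge (ltIl ja).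
have [cb cbj jbc] := exists_lower_neighbor_ge (ltIl jb).
rewrite -(join_irr_lower_neighbor_uniq jirr caj cbj) in jbc.
apply: contraL (lower_neighbor_lt caj) => /meet_idPl <-.
by rewrite meetUr le_gtF // leUx jac jbc.
Qed.

Lemma join_irr_lower_neighbors_le x b :
  ~~ (x <= b) -> (forall c, lower_neighbor c x -> c <= b) -> join_irr x.
Proof.
move=> xb lnb; have [c0 c0x _] := exists_lower_neighbor_ge (ltIl xb).
apply/cards1P; exists c0; apply/setP => c; rewrite !inE.
apply/idP/eqP => [cx | -> //].
have c0c_x : c0 <= c0 `|` c <= x.
  by rewrite leUl leUx !ltW ?lower_neighbor_lt.
case/orP: (lower_neighbor_between c0x c0c_x) => /eqP c0cE.
  have cc0_x : c <= c0 <= x by rewrite -[X in c <= X]c0cE leUr ltW ?lower_neighbor_lt.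
  case/orP: (lower_neighbor_between cx cc0_x) => /eqP // c0E.
  by move: (lower_neighbor_lt c0x); rewrite c0E ltxx.
by move: xb; rewrite -c0cE leUx !lnb.
Qed.

Lemma exists_join_irr_le_nle x b :
  ~~ (x <= b) -> exists2 j, join_irr j & (j <= x) && ~~ (j <= b).
Proof.
elim/(@lt_wf_ind _ L): x => x IH xb.
have [/existsP[c /andP[cx cb]] | lnb] :=
  boolP [exists c, lower_neighbor c x && ~~ (c <= b)].
  have [j jirr /andP[jc jb]] := IH c (lower_neighbor_lt cx) cb.
  by exists j; rewrite // jb (le_trans jc) ?ltW ?lower_neighbor_lt.
exists x; rewrite ?lexx //; apply: (join_irr_lower_neighbors_le xb) => c cx.
by apply: contraNT lnb => cb; apply/existsP; exists c; rewrite cx.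
Qed.

Lemma le_join_irrP a b :
  reflect (forall j, join_irr j -> j <= a -> j <= b) (a <= b).
Proof.
apply: (iffP idP) => [ab j _ ja | jab]; first exact: le_trans ab.
apply: contraT => /exists_join_irr_le_nle[j jirr /andP[ja]].
by rewrite jab.
Qed.

Definition lower_neighbor_split I J :=
  forall p q, lower_neighbor q p -> p \in I \/ q \in J.

Definition meets_intervals I J :=
  forall p q, p \in I -> q \in J -> exists2 r, r \in I :&: J & p `&` q <= r <= p `|` q.

Lemma exists_in_IJ_between_le I J a q :
  lower_neighbor_split I J ->
  a \in I -> q \notin I -> a <= q -> exists2 r, r \in I :&: J & a <= r <= q.
Proof.
move=> nbIJ aI; elim/(@lt_wf_ind _ L): q => q IH qI aq.
have aq' : a < q by rewrite lt_neqAle aq andbT; apply: contraNneq qI => <-.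
have [c cq ac] := exists_lower_neighbor_ge aq'.
have cq' := ltW (lower_neighbor_lt cq).
have [cI | cnI] := boolP (c \in I).
  case: (nbIJ _ _ cq) => [qI' | cJ]; first by rewrite qI' in qI.
  by exists c; rewrite ?inE ?cI ?cJ ?ac.
have [r rIJ /andP[ar rc]] := IH c (lower_neighbor_lt cq) cnI ac.
by exists r; rewrite // ar (le_trans rc).
Qed.

Lemma meets_intervalsP I J :
  poset_ideal I -> I :|: J = setT -> meets_intervals I J <-> lower_neighbor_split I J.
Proof.
move=> idI IJT; split=> [meetIJ p q qp | nbIJ p q pI qJ].
  have [pI | pnI] := boolP (p \in I); first by left.
  have [qJ | qnJ] := boolP (q \in J); first by right.
  have pJ : p \in J by move: (in_setT p); rewrite -IJT inE (negbTE pnI).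
  have qI : q \in I by move: (in_setT q); rewrite -IJT inE (negbTE qnJ) orbF.
  have [r /setIP[rI rJ]] := meetIJ q p qI pJ.
  have qp' := ltW (lower_neighbor_lt qp).
  rewrite (meet_idPl qp') (join_idPr qp') => /(lower_neighbor_between qp)/orP[] /eqP rE.
    by rewrite rE (negbTE qnJ) in rJ.
  by rewrite rE (negbTE pnI) in rI.
have [pJ | pnJ] := boolP (p \in J); first by exists p; rewrite ?inE ?pI ?leIl ?leUl.
have [qI | qnI] := boolP (q \in I); first by exists q; rewrite ?inE ?qI ?leIr ?leUr.
have pqI : p `&` q \in I.
  by have := leIl p q; rewrite le_eqVlt => /predU1P[-> // | /(idI _ _ pI)].
have [r rIJ /andP[pqr rq]] := exists_in_IJ_between_le nbIJ pqI qnI (leIr q p).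
by exists r; rewrite // pqr (le_trans rq) ?leUr.
Qed.

End DistrLattice.

Local Open Scope ring_scope.

Section MonomialIdeal.

Context (n : nat) (R : nzRingType) (T : finType) (g : T -> 'X_{1..n}).

Lemma mcoeff_mulX_nle (c : {mpoly R[n]}) e m : ~~ (e <= m)%MM -> (c * 'X_[e])@_m = 0.
Proof.
move=> em; rewrite mcoeffM big1 // => k /eqP mE; rewrite mcoeffX.
have [ekE | _] := eqVneq e k.2; last by rewrite mulr0.
have : (e <= k.1 + k.2)%MM by rewrite ekE lem_addl.
by rewrite -mE (negbTE em).
Qed.

Lemma monomial_idealP (A : {set T}) (f : {mpoly R[n]}) :
  (exists c : T -> {mpoly R[n]}, f = \sum_(t in A) c t * 'X_[g t]) <->
  (forall m, m \in msupp f -> exists2 t, t \in A & (g t <= m)%MM).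
Proof.
split=> [[c ->] m | fA].
  have [/exists_inP[t tA tm] _ | nodiv] := boolP [exists t in A, (g t <= m)%MM].
    by exists t.
  rewrite mcoeff_msupp raddf_sum big1 ?eqxx // => t tA /=.
  by apply: mcoeff_mulX_nle; apply: contra nodiv => tm; apply/exists_inP; exists t.
rewrite [f]mpolyE big_seq; elim/big_ind: _ => [|_ _ [c1 ->] [c2 ->] | m].
- by exists (fun=> 0); rewrite big1 // => t _; rewrite mul0r.
- exists (fun t => c1 t + c2 t); rewrite -big_split.
  by apply: eq_bigr => t _; rewrite mulrDl.
case/fA=> t tA tm; exists (fun s => if s == t then f@_m *: 'X_[m - g t] else 0).
rewrite (bigD1 t) //= eqxx big1 ?addr0 => [|s /andP[_ /negbTE ->]]; last by rewrite mul0r.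
by rewrite -scalerAl -mpolyXD submK.
Qed.

End MonomialIdeal.

Lemma sum_nat_eq_pred (T : finType) (P : pred T) (j : T) :
  (\sum_(p | P p) (p == j))%N = P j.
Proof.
rewrite big_mkcond (bigD1 j) //= eqxx big1 => [|p /negbTE ->]; last by case: (P p).
by case: (P j).
Qed.

Section HibiIdeal.

Context {disp : Order.disp_t} (L : finDistrLatticeType disp) (K : fieldType).

Local Notation N := (nJI L).

Definition xidx (j : JI L) : 'I_(N + N) := lshift N (enum_rank j).
Definition yidx (j : JI L) : 'I_(N + N) := rshift N (enum_rank j).

Definition u_exp (q : L) : 'X_{1..N + N} :=
  (\sum_(j : JI L | (val j <= q)%O) U_(xidx j) +
   \sum_(j : JI L | ~~ (val j <= q)%O) U_(yidx j))%MM.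

Lemma u_monE q : u_mon K q = 'X_[u_exp q].
Proof. by rewrite /u_mon mpolyXD !(big_morph _ (@mpolyXD _ K) (@mpolyX0 _ K)). Qed.

Lemma u_exp_xidx q j : u_exp q (xidx j) = (val j <= q)%O.
Proof.
rewrite mnmDE !mnm_sumE [X in (_ + X)%N]big1 => [|i _]; last first.
  by rewrite mnm1E eq_rlshift.
rewrite addn0 -(sum_nat_eq_pred (fun i : JI L => val i <= q)%O).
by apply: eq_bigr => i _; rewrite mnm1E (inj_eq (@lshift_inj _ _)) (inj_eq enum_rank_inj).
Qed.

Lemma u_exp_yidx q j : u_exp q (yidx j) = ~~ (val j <= q)%O.
Proof.
rewrite mnmDE !mnm_sumE [X in (X + _)%N]big1 => [|i _]; last first.
  by rewrite mnm1E eq_lrshift.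
rewrite add0n -(sum_nat_eq_pred (fun i : JI L => ~~ (val i <= q))%O).
by apply: eq_bigr => i _; rewrite mnm1E (inj_eq (@rshift_inj _ _)) (inj_eq enum_rank_inj).
Qed.

Lemma idx_cases (i : 'I_(N + N)) : exists j, i = xidx j \/ i = yidx j.
Proof.
rewrite -(splitK i); case: (split i) => k; exists (enum_val k); [left | right];
  by rewrite /xidx /yidx enum_valK.
Qed.

Lemma H_idealP (A : {set L}) (f : Spoly L K) :
  H_ideal A f <-> (forall m, m \in msupp f -> exists2 r, r \in A & (u_exp r <= m)%MM).
Proof.
rewrite -monomial_idealP; split=> -[c fE]; exists c; rewrite fE;
  by apply: eq_bigr => q _; rewrite u_monE.
Qed.

Lemma H_ideal_subset (A B : {set L}) (f : Spoly L K) :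
  A \subset B -> H_ideal A f -> H_ideal B f.
Proof.
move=> /subsetP AB /H_idealP fA; apply/H_idealP => m /fA[r rA rm].
by exists r; first exact: AB.
Qed.

Lemma H_idealX (A : {set L}) r m :
  r \in A -> (u_exp r <= m)%MM -> H_ideal A ('X_[m] : Spoly L K).
Proof. by move=> rA rm; apply/H_idealP => m' /mem_msuppXP <-; exists r. Qed.

Lemma u_exp_le_mlcm p q r :
  (u_exp r <= mlcm (u_exp p) (u_exp q))%MM = (p `&` q <= r <= p `|` q)%O.
Proof.
apply/mnm_lepP/andP => [le_rpq | [/le_join_irrP pqr /le_join_irrP rpq] i].
  split; apply/le_join_irrP => j jirr.
    rewrite lexI => /andP[jp jq]; move: (le_rpq (yidx (Sub j jirr))).
    by rewrite [X in (_ <= X)%N]mnmE !u_exp_yidx /= jp jq; case: (j <= r)%O.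
  move=> jr; move: (le_rpq (xidx (Sub j jirr))).
  by rewrite [X in (_ <= X)%N]mnmE !u_exp_xidx /= jr join_irr_leU // leq_max !lt0b.
rewrite [X in (_ <= X)%N]mnmE; have [j [-> | ->]] := idx_cases i.
  rewrite !u_exp_xidx; case: (boolP (val j <= r)%O) => //= /(rpq _ (valP j)).
  by rewrite join_irr_leU ?(valP j) // leq_max !lt0b.
rewrite !u_exp_yidx; case: (boolP (val j <= r)%O) => //= jnr.
rewrite leq_max !lt0b -negb_and -lexI; apply: contra jnr; exact: pqr (valP j).
Qed.

Lemma H_idealI_meets_intervals (I J : {set L}) :
  (forall f : Spoly L K, H_ideal (I :&: J) f <-> H_ideal I f /\ H_ideal J f) <->
  meets_intervals I J.
Proof.
split=> [eqH p q pI qJ | meetIJ f].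
  pose m := mlcm (u_exp p) (u_exp q).
  have : H_ideal (I :&: J) ('X_[m] : Spoly L K).
    by apply/eqH; split; [apply: H_idealX pI _ | apply: H_idealX qJ _];
      rewrite (lem_mlcml, lem_mlcmr).
  have mX : m \in msupp ('X_[m] : Spoly L K) by rewrite msuppX mem_seq1.
  by case/H_idealP/(_ m mX) => r rIJ; rewrite u_exp_le_mlcm; exists r.
split=> [fIJ | [/H_idealP fI /H_idealP fJ]].
  by split; apply: H_ideal_subset fIJ; rewrite (subsetIl, subsetIr).
apply/H_idealP => m mf; have [p pI pm] := fI m mf; have [q qJ qm] := fJ m mf.
have [r rIJ pqr] := meetIJ p q pI qJ.
exists r => //; apply: (lepm_trans (m2 := mlcm (u_exp p) (u_exp q))).
  by rewrite u_exp_le_mlcm.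
by rewrite lem_mlcm pm qm.
Qed.

End HibiIdeal.

Theorem theorem3p8 (disp : Order.disp_t) (L : finDistrLatticeType disp)
    (K : fieldType) (I J : {set L}) :
  poset_ideal I -> poset_coideal J -> I :|: J = [set: L] ->
  ((forall f : Spoly L K,
      @H_ideal _ L K (I :&: J) f <-> (@H_ideal _ L K I f /\ @H_ideal _ L K J f))
   <->
   (forall p q : L, lower_neighbor q p -> p \in I \/ q \in J)).
Proof.
move=> idI _ IJT.
exact: iff_trans (H_idealI_meets_intervals K I J) (meets_intervalsP idI IJT).
Qed.
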